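(* Assume that $b_0 + \sum_{i \in [n]} b_i f_i(x_i) >0$ for every $x \in \mathcal{X}$. If the unary binarization formulation $\{(x,z) : Ax \geq b,\ x_i = p_{i0} + \sum_{j \in [d_i]} (p_{ij} - p_{i,j-1}) z_{ij},\ 1 \geq z_{i1} \geq z_{i2} \geq \cdots \geq z_{id_i} \geq 0,\ z_i \in \{0,1\}^{d_i} \text{ for } i \in [n]\}$ is ideal and, for $i \in [n]$, $g_i(x_i) = 0$, then a linear programming formulation of the problem $$\max \Big\{ \frac{ a_0 + \sum_{i \in [n]}a_i f_i(x_i)}{b_0 + \sum_{i \in [n]} b_i f_i(x_i)} + \sum_{i \in [n]} g_i(x_i) \ \Big|\ x \in P \cap \mathcal{X} \Big\}$$ is given as follows: $$\begin{aligned} \max \quad &a_0 \rho + \sum_{i \in [n]}a_i \mu_i \\ \text{s.t.} \quad & b_0\rho + \sum_{i \in [n]} b_i\mu_i = 1 \\ & \mu_i = f_i(p_{i0}) \cdot \rho + \sum_{j \in [d_i]} \big(f_i(p_{ij}) - f_{i}(p_{i,j-1})\big) \cdot s_{ij} && \text{for } i \in [n] \\ & \rho \geq s_{i1} \geq s_{i2} \geq \cdots \geq s_{id_i} \geq 0 && \text{for } i \in [n] \\ &A y \geq b\rho \quad \text{and} \quad y_i = p_{i0} \cdot \rho + \sum_{j \in [d_i]} (p_{ij} - p_{i,j-1}) \cdot s_{ij} && \text{for } i \in [n]. \end{aligned}$$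
   Context: Let $\mathcal{X} = \prod_{i\in[n]} \{p_{i0}, p_{i1}, \ldots, p_{id_i}\}$ with real $p_{i0} < p_{i1} < \cdots < p_{id_i}$ and positive integers $d_i$, and let $P = \{x \in \mathbb{R}^n : Ax \geq b\}$ be a polytope. Let $a_0,\dots,a_n$ be real numbers, $b_0,\dots,b_n$ nonnegative real numbers, and $f_i, g_i$ univariate functions on $\{p_{i0},\dots,p_{id_i}\}$. An MIP formulation is called ideal if every vertex of its LP relaxation (obtained by dropping integrality) has binary values for the integer-constrained variables. Here $\rho$ plays the role of $1/(b_0+\sum_i b_i f_i(x_i))$, $\mu_i$ of $f_i(x_i)\rho$, $s_{ij}$ of $z_{ij}\rho$, and $y_i$ of $x_i\rho$. *)

From HB Require Import structures.
From mathcomp Require Import all_boot all_order all_algebra.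
Unset Printing Implicit Defensive.
Import Order.TTheory GRing.Theory Num.Theory.
Local Open Scope ring_scope.

Section Defs.
Variables (R : realFieldType) (n m : nat).

(* Conventions: the paper's index j in [d_i] = {1..d_i} is represented by
   j' : 'I_(d i) with j = j'+1; so the paper's z_{ij} is [z i j'] and the
   coefficient (p_{ij} - p_{i,j-1}) is (p i j'.+1 - p i j').
   p i k for k <= d i is the paper's p_{ik}. *)

Definition inP (A : 'M[R]_(m, n)) (b : 'cV[R]_m) (x : 'I_n -> R) : Prop :=
  forall k : 'I_m, b k ord0 <= \sum_(i < n) A k i * x i.

Definition inX (d : 'I_n -> nat) (p : 'I_n -> nat -> R) (x : 'I_n -> R) : Prop :=
  forall i : 'I_n, exists k : nat, (k <= d i)%N /\ x i = p i k.

Definition unary_relax (A : 'M[R]_(m, n)) (b : 'cV[R]_m) (d : 'I_n -> nat)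
  (p : 'I_n -> nat -> R) (x : 'I_n -> R) (z : forall i : 'I_n, 'I_(d i) -> R) : Prop :=
  inP A b x /\
  forall i : 'I_n,
    x i = p i 0%N + \sum_(j < d i) (p i j.+1 - p i j) * z i j /\
    (forall j : 'I_(d i), z i j <= 1) /\
    (forall j j' : 'I_(d i), (j <= j')%N -> z i j' <= z i j) /\
    (forall j : 'I_(d i), 0 <= z i j).

Definition unary_MIP A b d p x z : Prop :=
  unary_relax A b d p x z /\
  forall i (j : 'I_(d i)), z i j = 0 \/ z i j = 1.

Definition unary_relax_vertex A b d p (x : 'I_n -> R)
    (z : forall i : 'I_n, 'I_(d i) -> R) : Prop :=
  unary_relax A b d p x z /\
  forall (x1 x2 : 'I_n -> R) (z1 z2 : forall i : 'I_n, 'I_(d i) -> R) (t : R),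
    0 < t < 1 -> unary_relax A b d p x1 z1 -> unary_relax A b d p x2 z2 ->
    (forall i, x i = t * x1 i + (1 - t) * x2 i) ->
    (forall i j, z i j = t * z1 i j + (1 - t) * z2 i j) ->
    (forall i, x1 i = x2 i) /\ (forall i j, z1 i j = z2 i j).

Definition unary_ideal A b d p : Prop :=
  forall x z, unary_relax_vertex A b d p x z ->
    forall i (j : 'I_(d i)), z i j = 0 \/ z i j = 1.

Definition is_max_value (T : Type) (Feas : T -> Prop) (F : T -> R) (v : R) : Prop :=
  (exists t, Feas t /\ F t = v) /\ (forall t, Feas t -> F t <= v).

End Defs.

From HB Require Import structures.
From mathcomp Require Import all_boot all_order all_algebra.
From mathcomp Require Import ring lra.
From Stdlib Require Import Classical.
Import Order.TTheory GRing.Theory Num.Theory.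
Local Open Scope ring_scope.

(* Eliminating x through x_i = p_i0 + sum_j (p_ij - p_i,j-1) z_ij, the LP
   relaxation of the unary formulation becomes a polytope in z alone (it lies
   in the unit cube), and idealness says that its extreme points are the
   binary staircases z_i = (1,...,1,0,...,0), i.e. the points of P ∩ X.
   For a fixed level v the Dinkelbach function N - v D (numerator minus v
   times denominator) is affine in z, so it is maximised over the relaxation
   at an extreme point: from a non-extreme point one moves along a segment in
   the improving direction until a new constraint becomes tight.  The
   Charnes-Cooper substitution rho = 1/D, s = z rho, y = x rho,
   mu_i = f_i(x_i) rho maps relaxation points with D > 0 to feasible points
   of the LP and N/D to its objective; conversely every LP point comes from
   a relaxation point with N = v D, v being its LP value.  Hence every grid
   value is an LP value and every LP value is dominated by a grid value, and
   g, which vanishes on the grid, plays no role. *)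

Lemma is_max_value_transfer (R : realFieldType) (S T : Type)
    (FS : S -> Prop) (FT : T -> Prop) (F : S -> R) (G : T -> R) (v : R) :
  (forall s, FS s -> exists2 t, FT t & G t = F s) ->
  (forall t, FT t -> exists2 s, FS s & G t <= F s) ->
  is_max_value R S FS F v <-> is_max_value R T FT G v.
Proof.
move=> ST TS; split=> -[[x0 [fx0 vx0]] vmax].
- split=> [|t ft].
    by have [t0 ft0 t0x0] := ST x0 fx0; exists t0; rewrite t0x0.
  by have [s fs ts] := TS t ft; apply: le_trans ts (vmax s fs).
- have [s0 fs0 x0s0] := TS x0 fx0; split=> [|s fs].
    exists s0; split=> //; apply/le_anti; rewrite -vx0 x0s0 andbT.
    by have [t ft <-] := ST s0 fs0; rewrite vx0 vmax.
  by have [t ft <-] := ST s fs; apply: vmax.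
Qed.

Lemma sum_mulrA (R : pzSemiRingType) (I : Type) (r : seq I) (F G : I -> R) (x : R) :
  \sum_(i <- r) F i * (G i * x) = (\sum_(i <- r) F i * G i) * x.
Proof. by rewrite mulr_suml; apply: eq_bigr => i _; rewrite mulrA. Qed.

(** * Extreme points of bounded polyhedra *)

Section ExtremePoints.
Context {R : realFieldType} {V : lmodType R} {C : finType}.
Variables (c : C -> V -> R) (c_scalar : forall k, scalar (c k)) (beta : C -> R).

Definition feasible (q : V) := forall k, beta k <= c k q.

Definition extreme (q : V) :=
  feasible q /\
  forall q1 q2 (t : R), 0 < t < 1 -> feasible q1 -> feasible q2 ->
    q = t *: q1 + (1 - t) *: q2 -> q1 = q2.

Definition slack (q : V) := #|[pred k | c k q != beta k]|.

Lemma tight_convex q1 q2 (t : R) k : 0 < t < 1 -> feasible q1 -> feasible q2 ->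
  c k (t *: q1 + (1 - t) *: q2) = beta k -> c k q1 = beta k /\ c k q2 = beta k.
Proof.
move=> /andP[t0 t1] f1 f2; rewrite c_scalar (scalable_linear (c_scalar k)) /=.
by have := f1 k; have := f2 k; split; nra.
Qed.

Hypothesis recession_cone0 : forall dir, (forall k, 0 <= c k dir) -> dir = 0.

Variables (h : V -> R) (h_scalar : scalar h).

Lemma ratio_test q dir : feasible q -> dir != 0 ->
  (forall k, c k q = beta k -> c k dir = 0) -> 0 <= h dir ->
  exists2 q', feasible q' & h q <= h q' /\ (slack q' < slack q)%N.
Proof.
move=> fq dir_nz dir_tight h_dir.
have [k0 ck0] : exists k, c k dir < 0.
  apply/existsP; apply: contraNT dir_nz => /existsPn no_neg.
  by apply/eqP/recession_cone0 => k; rewrite leNgt no_neg.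
pose r k := (c k q - beta k) / - c k dir.
have [ks ks_neg ks_min] := arg_minP r (ck0 : (fun k => c k dir < 0) k0).
set lam := r ks.
have lam_ge0 : 0 <= lam by rewrite divr_ge0 ?subr_ge0 // oppr_ge0 ltW.
exists (lam *: dir + q); [move=> k | split].
- rewrite c_scalar; have := fq k; case: (ltP (c k dir) 0) => ck.
  + by have := ks_min k ck; rewrite -/lam /r ler_pdivlMr ?oppr_gt0 // mulrN; lra.
  + by have := mulr_ge0 lam_ge0 ck; lra.
- by rewrite h_scalar; have := mulr_ge0 lam_ge0 h_dir; lra.
- apply: proper_card; apply/properP; split.
    apply/subsetP => k; rewrite !inE; apply: contraNN => /eqP ck.
    by rewrite c_scalar (dir_tight _ ck) mulr0 add0r ck.
  exists ks; rewrite !inE.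
    by apply: contraTneq ks_neg => /dir_tight ->; rewrite ltxx.
  by rewrite negbK c_scalar /lam /r; apply/eqP; field; rewrite lt_eqF.
Qed.

Lemma extreme_ge q : feasible q -> exists2 u, extreme u & h q <= h u.
Proof.
elim: {q}(slack q).+1 {-2}q (ltnSn (slack q)) => // N IH q slack_q fq.
apply: NNPP => no_u; suff extreme_q : extreme q by apply: no_u; exists q.
split=> // q1 q2 t t01 f1 f2 q_conv.
case: (eqVneq q1 q2) => // q12; exfalso.
have cB k u v : c k (u - v) = c k u - c k v by rewrite (zmod_morphism_linear (c_scalar k)).
have tight k : c k q = beta k -> c k q1 = c k q2.
  by rewrite q_conv => /tight_convex[] // -> ->.
have [dir [dir_nz dir_tight h_dir]] : exists dir, [/\ dir != 0,
    forall k, c k q = beta k -> c k dir = 0 & 0 <= h dir].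
  case: (leP 0 (h (q1 - q2))) => hq; [exists (q1 - q2) | exists (q2 - q1)]; split.
  - by rewrite subr_eq0.
  - by move=> k /tight; rewrite cB => ->; rewrite subrr.
  - exact: hq.
  - by rewrite subr_eq0 eq_sym.
  - by move=> k /tight; rewrite cB => ->; rewrite subrr.
  - by move: hq; rewrite !(zmod_morphism_linear h_scalar); lra.
have [q' fq' [hqq' slack_q']] := ratio_test q dir fq dir_nz dir_tight h_dir.
have [|u eu hu] := IH q' _ fq'; first exact: leq_trans slack_q' _.
by apply: no_u; exists u => //; apply: le_trans hu.
Qed.

End ExtremePoints.

Arguments extreme_ge {R V C c} c_scalar {beta} recession_cone0 {h} h_scalar {q}.

(** * Unary expansions *)

Section UnarySum.
Context {R : realFieldType}.

Definition unary_sum (phi : nat -> R) {D} (w : 'I_D -> R) :=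
  phi 0%N + \sum_(j < D) (phi j.+1 - phi j) * w j.

Lemma eq_unary_sum phi {D} {w w' : 'I_D -> R} : w =1 w' ->
  unary_sum phi w = unary_sum phi w'.
Proof. by move=> ww'; congr (_ + _); apply: eq_bigr => j _; rewrite ww'. Qed.

Lemma unary_sumMr phi D (w : 'I_D -> R) r :
  unary_sum phi w * r = phi 0%N * r + \sum_(j < D) (phi j.+1 - phi j) * (w j * r).
Proof. by rewrite /unary_sum mulrDl sum_mulrA. Qed.

Lemma unary_sum_step phi D k : (k <= D)%N ->
  unary_sum phi (fun j : 'I_D => (j < k)%N%:R) = phi k.
Proof.
move=> kD; rewrite /unary_sum.
have -> : \sum_(j < D) (phi j.+1 - phi j) * (j < k)%N%:R =
          \sum_(j < D | (j < k)%N) (phi j.+1 - phi j).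
  by rewrite [RHS]big_mkcond; apply: eq_bigr => j _; case: ifP; rewrite ?mulr1 ?mulr0.
rewrite -(big_ord_widen _ (fun j => phi j.+1 - phi j) kD).
by rewrite -(big_mkord xpredT (fun j => phi j.+1 - phi j)) telescope_sumr // addrC subrK.
Qed.

Lemma antitone_binary_step D (w : 'I_D -> R) :
  (forall j, w j = 0 \/ w j = 1) -> (forall j j' : 'I_D, (j <= j')%N -> w j' <= w j) ->
  exists2 k, (k <= D)%N & forall j : 'I_D, w j = (j < k)%N%:R.
Proof.
move=> w01 w_anti; case: (pickP (fun j => w j == 0)) => [j0 w0 | no0]; last first.
  exists D => // j; rewrite ltn_ord; have := no0 j.
  by case: (w01 j) => ->; rewrite ?eqxx.
have [k /eqP wk kmin] := @arg_minnP _ j0 (fun j => w j == 0) val w0.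
exists k; first exact: ltnW.
move=> j; case: (ltnP j k) => jk.
  by case: (w01 j) => // /eqP /kmin; rewrite leqNgt jk.
by have := w_anti _ _ jk; rewrite wk; case: (w01 j) => -> //; lra.
Qed.

End UnarySum.

(** * The unary relaxation and the Charnes-Cooper transformation *)

Section UnaryRelaxation.
Variables (R : realFieldType) (n m : nat) (d : 'I_n -> nat) (p : 'I_n -> nat -> R).
Variables (A : 'M[R]_(m, n)) (b : 'cV[R]_m).

Definition zindex := {i : 'I_n & 'I_(d i)}.
Local Notation V := {ffun zindex -> R^o}.

Definition zcoord (q : V) i (j : 'I_(d i)) : R := q (Tagged (fun i => 'I_(d i)) j).
Definition zvec (z : forall i, 'I_(d i) -> R) : V := [ffun s => z (tag s) (tagged s)].
Definition unary_point (q : V) i := unary_sum (p i) (zcoord q i).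

Lemma zcoord_zvec z i j : zcoord (zvec z) i j = z i j.
Proof. by rewrite /zcoord ffunE. Qed.

Lemma zcoordP (a : R) (u v : V) i j :
  zcoord (a *: u + v) i j = a * zcoord u i j + zcoord v i j.
Proof. by rewrite /zcoord !ffunE. Qed.

Definition unary_lin (phi : 'I_n -> nat -> R) (al : 'I_n -> R) (q : V) :=
  \sum_(i < n) al i * \sum_(j < d i) (phi i j.+1 - phi i j) * zcoord q i j.

Lemma unary_lin_scalar phi al : scalar (unary_lin phi al).
Proof.
move=> a u v; rewrite /unary_lin mulr_sumr -big_split; apply: eq_bigr => i _ /=.
have -> : \sum_(j < d i) (phi i j.+1 - phi i j) * zcoord (a *: u + v) i j
    = a * \sum_(j < d i) (phi i j.+1 - phi i j) * zcoord u i j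
      + \sum_(j < d i) (phi i j.+1 - phi i j) * zcoord v i j.
  by rewrite mulr_sumr -big_split; apply: eq_bigr => j _ /=; rewrite zcoordP; ring.
ring.
Qed.

Lemma sum_unary_sum phi al q :
  \sum_(i < n) al i * unary_sum (phi i) (zcoord q i)
  = \sum_(i < n) al i * phi i 0%N + unary_lin phi al q.
Proof. by rewrite /unary_lin -big_split; apply: eq_bigr => i _; rewrite mulrDr. Qed.

(* The relaxation in the variables z alone: the rows of A x >= b, the box
   constraints -z_ij >= -1 (upper) and z_ij >= 0, and z_ij >= z_ij' for
   j <= j' (the index set contains all pairs, the others giving 0 >= 0). *)
Definition constr :=
  ('I_m + {i : 'I_n & ('I_(d i) * bool)%type} + {i : 'I_n & ('I_(d i) * 'I_(d i))%type})%type.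

Definition constr_lhs (k : constr) (q : V) : R :=
  match k with
  | inl (inl r) => unary_lin p (fun i => A r i) q
  | inl (inr (existT i (j, upper))) => if upper then - zcoord q i j else zcoord q i j
  | inr (existT i (j, j')) => if (j <= j')%N then zcoord q i j - zcoord q i j' else 0
  end.

Definition constr_rhs (k : constr) : R :=
  match k with
  | inl (inl r) => b r ord0 - \sum_(i < n) A r i * p i 0%N
  | inl (inr (existT _ (_, upper))) => if upper then -1 else 0
  | inr _ => 0
  end.

Lemma constr_lhs_scalar k : scalar (constr_lhs k).
Proof.
move=> a u v; case: k => [[r | [i [j []]]] | [i [j j']]] /=.
- exact: unary_lin_scalar.
- by rewrite zcoordP; ring.
- exact: zcoordP.
- by case: ifP => _; rewrite ?zcoordP; ring.
Qed.

Lemma constr_recession_cone0 dir : (forall k, 0 <= constr_lhs k dir) -> dir = 0.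
Proof.
move=> dir_ge0; apply/ffunP => -[i j]; rewrite ffunE.
have := dir_ge0 (inl (inr (existT _ i (j, true)))).
by have := dir_ge0 (inl (inr (existT _ i (j, false)))); rewrite /= /zcoord; lra.
Qed.

Local Notation relax_feasible := (feasible constr_lhs constr_rhs).

Lemma feasibleE q : relax_feasible q <-> unary_relax R n m A b d p (unary_point q) (zcoord q).
Proof.
have rowE r : (b r ord0 <= \sum_(i < n) A r i * unary_point q i) =
              (constr_rhs (inl (inl r)) <= constr_lhs (inl (inl r)) q).
  by rewrite /= /unary_point sum_unary_sum lerBlDl.
split=> [fq | [xP zP]].
- split=> [r | i]; first by rewrite rowE; exact: fq.
  split=> //; split; [move=> j | split; [move=> j j' jj' | move=> j]].
  + by have := fq (inl (inr (existT _ i (j, true)))); rewrite /=; lra.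
  + by have := fq (inr (existT _ i (j, j'))); rewrite /= jj'; lra.
  + exact: fq (inl (inr (existT _ i (j, false)))).
- case=> [[r | [i [j []]]] | [i [j j']]] /=.
  + by rewrite -rowE.
  + by have [_ [z1 _]] := zP i; have := z1 j; lra.
  + by have [_ [_ [_ z0]]] := zP i; exact: z0 j.
  + case: ifP => jj' //; have [_ [_ [zm _]]] := zP i; rewrite subr_ge0; exact: zm.
Qed.

Lemma eq_unary_relax x x' z z' : (forall i, x i = x' i) -> (forall i j, z i j = z' i j) ->
  unary_relax R n m A b d p x z -> unary_relax R n m A b d p x' z'.
Proof.
move=> xx' zz' [xP zP]; split=> [r | i].
  by under eq_bigr do rewrite -xx'; exact: xP.
have [xi [z1 [zm z0]]] := zP i; rewrite -xx' xi.
split; first by congr (_ + _); apply: eq_bigr => j _; rewrite zz'.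
by split; [|split] => [j | j j' jj' | j]; rewrite -!zz'; [exact: z1 | exact: zm | exact: z0].
Qed.

Lemma relax_zvec {x z} : unary_relax R n m A b d p x z ->
  relax_feasible (zvec z) /\ forall i, x i = unary_point (zvec z) i.
Proof.
move=> rxz; have xE i : x i = unary_point (zvec z) i.
  by have [-> _] := rxz.2 i; apply: eq_unary_sum => j; rewrite zcoord_zvec.
by split=> //; apply/feasibleE; apply: eq_unary_relax rxz => // i j; rewrite zcoord_zvec.
Qed.

Lemma extreme_vertex q : extreme constr_lhs constr_rhs q ->
  unary_relax_vertex R n m A b d p (unary_point q) (zcoord q).
Proof.
case=> fq q_ext; split=> [|x1 x2 z1 z2 t t01 r1 r2 _ qz]; first exact/feasibleE.
have [[f1 x1E] [f2 x2E]] := (relax_zvec r1, relax_zvec r2).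
have z12 : zvec z1 = zvec z2.
  by apply: q_ext t01 f1 f2 _; apply/ffunP => -[i j]; rewrite !ffunE; exact: qz.
split=> [i | i j]; first by rewrite x1E x2E z12.
by rewrite -(zcoord_zvec z1) -(zcoord_zvec z2) z12.
Qed.

Definition grid_point (k : 'I_n -> nat) : V := zvec (fun i (j : 'I_(d i)) => (j < k i)%N%:R).

Definition grid_index (k : 'I_n -> nat) (x : 'I_n -> R) :=
  forall i, (k i <= d i)%N /\ x i = p i (k i).

Lemma unary_sum_grid_point k i (phi : nat -> R) : (k i <= d i)%N ->
  unary_sum phi (zcoord (grid_point k) i) = phi (k i).
Proof.
by move=> kd; rewrite -(unary_sum_step phi _ _ kd); apply: eq_unary_sum => j; rewrite zcoord_zvec.
Qed.

Lemma extreme_grid_point {q} : unary_ideal R n m A b d p ->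
  extreme constr_lhs constr_rhs q ->
  exists2 k, (forall i, (k i <= d i)%N) & q = grid_point k.
Proof.
move=> ideal /extreme_vertex vq; have [_ zP] := vq.1.
have /fin_all_exists[k kP] :
    forall i, exists t, (t <= d i)%N /\ forall j, zcoord q i j = (j < t)%N%:R.
  move=> i; have [_ [_ [zm _]]] := zP i.
  by have [t td zt] := antitone_binary_step _ _ (ideal _ _ vq i) zm; exists t.
exists k => [i | ]; first exact: (kP i).1.
by apply/ffunP => -[i j]; rewrite ffunE; exact: (kP i).2 j.
Qed.

Lemma grid_point_feasible {k x} : grid_index k x ->
  relax_feasible (grid_point k) <-> inP R n m A b x.
Proof.
move=> kx; have xE i : x i = unary_point (grid_point k) i.
  by have [kd ->] := kx i; rewrite /unary_point unary_sum_grid_point.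
rewrite feasibleE; split=> [[xP _] r | xP].
  by under eq_bigr do rewrite xE; exact: xP.
apply: (eq_unary_relax _ _ (zcoord (grid_point k)) _ xE) => //; split=> // i.
split=> //; rewrite /zcoord; split; [|split] => [j | j j' jj' | j]; rewrite !ffunE /=.
- by rewrite lern1 leq_b1.
- by rewrite ler_nat; case: (ltnP j' (k i)) => // /(leq_ltn_trans jj') ->.
- exact: ler0n.
Qed.

Variable f : 'I_n -> R -> R.
Let fp i t := f i (p i t).

Definition objective (c0 : R) (al : 'I_n -> R) (q : V) :=
  c0 + \sum_(i < n) al i * unary_sum (fp i) (zcoord q i).

Lemma objective_grid_point {c0 al k x} : grid_index k x ->
  objective c0 al (grid_point k) = c0 + \sum_(i < n) al i * f i (x i).
Proof.
move=> kx; congr (_ + _); apply: eq_bigr => i _.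
by have [kd ->] := kx i; rewrite unary_sum_grid_point.
Qed.

Lemma objective_comb c1 al1 c2 al2 v q :
  objective c1 al1 q - v * objective c2 al2 q =
  objective (c1 - v * c2) (fun i => al1 i - v * al2 i) q.
Proof.
rewrite /objective.
have -> : \sum_(i < n) (al1 i - v * al2 i) * unary_sum (fp i) (zcoord q i) =
    \sum_(i < n) al1 i * unary_sum (fp i) (zcoord q i)
    - v * \sum_(i < n) al2 i * unary_sum (fp i) (zcoord q i).
  by rewrite mulr_sumr -sumrB; apply: eq_bigr => i _; ring.
ring.
Qed.

Lemma objective_extreme_ge c0 al {q} : relax_feasible q ->
  exists2 u, extreme constr_lhs constr_rhs u & objective c0 al q <= objective c0 al u.
Proof.
move=> fq.
have [u eu hu] := extreme_ge constr_lhs_scalar constr_recession_cone0 (unary_lin_scalar fp al) fq.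
by exists u => //; rewrite /objective !sum_unary_sum !addrA lerD2l.
Qed.

Variables (a0 : R) (a : 'I_n -> R) (b0 : R) (bb : 'I_n -> R).

Definition lp_feasible (w : R * ('I_n -> R) * (forall i : 'I_n, 'I_(d i) -> R) * ('I_n -> R)) :=
  let: (rho, mu, s, y) := w in
  b0 * rho + \sum_(i < n) bb i * mu i = 1 /\
  (forall i, mu i = f i (p i 0%N) * rho
                   + \sum_(j < d i) (f i (p i j.+1) - f i (p i j)) * s i j) /\
  (forall i (j : 'I_(d i)), s i j <= rho) /\
  (forall i (j j' : 'I_(d i)), (j <= j')%N -> s i j' <= s i j) /\
  (forall i (j : 'I_(d i)), 0 <= s i j) /\
  (forall k : 'I_m, b k ord0 * rho <= \sum_(i < n) A k i * y i) /\
  (forall i, y i = p i 0%N * rho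
                   + \sum_(j < d i) (p i j.+1 - p i j) * s i j).

Definition lp_value (w : R * ('I_n -> R) * (forall i : 'I_n, 'I_(d i) -> R) * ('I_n -> R)) :=
  let: (rho, mu, _, _) := w in a0 * rho + \sum_(i < n) a i * mu i.

Definition charnes_cooper (q : V) :=
  let r := (objective b0 bb q)^-1 in
  (r, fun i => unary_sum (fp i) (zcoord q i) * r, fun i j => zcoord q i j * r,
   fun i => unary_point q i * r).

Lemma charnes_cooper_feasible {q} : relax_feasible q -> 0 < objective b0 bb q ->
  lp_feasible (charnes_cooper q) /\
  lp_value (charnes_cooper q) = objective a0 a q / objective b0 bb q.
Proof.
move=> /feasibleE[xP zP] den_gt0; rewrite /lp_feasible /lp_value /charnes_cooper.
set r := _^-1; have r_gt0 : 0 < r by rewrite invr_gt0.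
have homE c0 al :
    c0 * r + \sum_(i < n) al i * (unary_sum (fp i) (zcoord q i) * r) = objective c0 al q * r.
  by rewrite sum_mulrA -mulrDl.
split; last exact: homE.
split; first by rewrite homE mulfV ?gt_eqF.
split; first by move=> i; rewrite unary_sumMr.
split; first by move=> i j; have [_ [z1 _]] := zP i; exact: ler_piMl (ltW r_gt0) (z1 j).
split; first by move=> i j j' jj'; have [_ [_ [zm _]]] := zP i; rewrite ler_pM2r //; exact: zm.
split; first by move=> i j; have [_ [_ [_ z0]]] := zP i; exact: mulr_ge0 (z0 j) (ltW r_gt0).
split; first by move=> r'; rewrite sum_mulrA ler_pM2r //; exact: xP.
by move=> i; rewrite unary_sumMr.
Qed.

Hypotheses (d_gt0 : forall i, (0 < d i)%N) (b0_ge0 : 0 <= b0).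

Lemma lp_feasible_rho_gt0 rho mu s y : lp_feasible (rho, mu, s, y) -> 0 < rho.
Proof.
case=> den [muE [s_le [_ [s_ge0 _]]]].
have rho_ge0 : 0 <= rho.
  case: (posnP n) => [n0 | n_gt0]; last first.
    by pose i0 := Ordinal n_gt0; exact: le_trans (s_ge0 i0 (Ordinal (d_gt0 i0))) (s_le _ _).
  move: den; rewrite big1 => [|i _]; last by have := ltn_ord i; rewrite {2}n0.
  by rewrite addr0 => b0rho; rewrite leNgt; apply/negP => /ltW /(mulr_ge0_le0 b0_ge0); lra.
rewrite lt_def rho_ge0 andbT; apply/eqP => rho0.
have s0 i j : s i j = 0 by have := s_le i j; have := s_ge0 i j; rewrite rho0; lra.
have mu0 i : mu i = 0 by rewrite muE rho0 mulr0 add0r big1 // => j _; rewrite s0 mulr0.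
move: den; rewrite rho0 mulr0 add0r big1 => [|i _]; last by rewrite mu0 mulr0.
by move/eqP; rewrite eq_sym oner_eq0.
Qed.

Lemma lp_feasible_relax {w} : lp_feasible w ->
  exists2 q, relax_feasible q & objective a0 a q = lp_value w * objective b0 bb q.
Proof.
case: w => [[[rho mu] s] y] lpw; have rho_gt0 := lp_feasible_rho_gt0 _ _ _ _ lpw.
case: lpw => den [muE [s_le [s_anti [s_ge0 [yP yE]]]]].
pose z i (j : 'I_(d i)) := s i j / rho.
have homE phi i : unary_sum phi (z i) * rho
    = phi 0%N * rho + \sum_(j < d i) (phi j.+1 - phi j) * s i j.
  by rewrite unary_sumMr; congr (_ + _); apply: eq_bigr => j _; rewrite divfK ?gt_eqF.
have objE c0 al : objective c0 al (zvec z) * rho = c0 * rho + \sum_(i < n) al i * mu i.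
  rewrite /objective mulrDl mulr_suml; congr (_ + _); apply: eq_bigr => i _.
  by rewrite -mulrA (eq_unary_sum _ (zcoord_zvec z i)) homE muE.
have rz : unary_relax R n m A b d p (fun i => y i / rho) z.
  split=> [r | i]; first by rewrite sum_mulrA ler_pdivlMr //; exact: yP.
  split; first by apply: (mulIf (lt0r_neq0 rho_gt0)); rewrite divfK ?gt_eqF // homE yE.
  split; first by move=> j; rewrite ler_pdivrMr // mul1r.
  split; first by move=> j j' jj'; rewrite ler_pM2r ?invr_gt0 //; exact: s_anti.
  by move=> j; rewrite divr_ge0 // ltW.
exists (zvec z); first exact: (relax_zvec rz).1.
have numE := objE a0 a; have denE := objE b0 bb; rewrite den in denE.
by rewrite /= -numE -mulrA [rho * _]mulrC denE mulr1.
Qed.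

Hypothesis den_gt0 :
  forall x, inX R n d p x -> 0 < b0 + \sum_(i < n) bb i * f i (x i).

Definition ratio (x : 'I_n -> R) :=
  (a0 + \sum_(i < n) a i * f i (x i)) / (b0 + \sum_(i < n) bb i * f i (x i)).

Lemma grid_lp_value x : inP R n m A b x -> inX R n d p x ->
  exists2 w, lp_feasible w & lp_value w = ratio x.
Proof.
move=> xP /[dup] xX /fin_all_exists[k kx].
have fk := (grid_point_feasible kx).2 xP.
have den : 0 < objective b0 bb (grid_point k).
  by rewrite (objective_grid_point kx); exact: den_gt0.
have [lpw val] := charnes_cooper_feasible fk den.
by exists (charnes_cooper (grid_point k)); rewrite // val !(objective_grid_point kx).
Qed.

Lemma lp_value_le_grid : unary_ideal R n m A b d p -> forall w, lp_feasible w ->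
  exists2 x, inP R n m A b x /\ inX R n d p x & lp_value w <= ratio x.
Proof.
move=> ideal w /lp_feasible_relax[q fq qv]; set v := lp_value w.
have [u eu] := objective_extreme_ge (a0 - v * b0) (fun i => a i - v * bb i) fq.
rewrite -!objective_comb qv subrr subr_ge0 => num_ge.
have [k kd uk] := extreme_grid_point ideal eu.
pose x i := p i (k i); have kx : grid_index k x by move=> i; split.
have xX : inX R n d p x by move=> i; exists (k i).
exists x; first by split=> //; apply/(grid_point_feasible kx); rewrite -uk; exact: eu.1.
rewrite /ratio ler_pdivlMr; last exact: den_gt0.
by move: num_ge; rewrite uk !(objective_grid_point kx).
Qed.

End UnaryRelaxation.

Arguments grid_lp_value {R n m d p A b f} a0 a {b0 bb} den_gt0 {x}.
Arguments lp_value_le_grid {R n m d p A b f} a0 a {b0 bb} d_gt0 b0_ge0 den_gt0 ideal {w}.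

Theorem theorem2 (R : realFieldType) (n m : nat)
    (d : 'I_n -> nat) (p : 'I_n -> nat -> R)
    (A : 'M[R]_(m, n)) (b : 'cV[R]_m)
    (a0 : R) (a : 'I_n -> R) (b0 : R) (bb : 'I_n -> R)
    (f g : 'I_n -> R -> R) :
  (* d_i positive, p_{i0} < ... < p_{id_i} *)
  (forall i, (0 < d i)%N) ->
  (forall i (k : nat), (k < d i)%N -> p i k < p i k.+1) ->
  (* P = {x : Ax >= b} is a polytope (bounded) *)
  (exists M : R, forall x, inP R n m A b x -> forall i, `|x i| <= M) ->
  (* b_0, ..., b_n nonnegative *)
  0 <= b0 -> (forall i, 0 <= bb i) ->
  (* denominator positive on X *)
  (forall x, inX R n d p x -> 0 < b0 + \sum_(i < n) bb i * f i (x i)) ->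
  (* unary binarization formulation is ideal *)
  unary_ideal R n m A b d p ->
  (* g_i(x_i) = 0 *)
  (forall i (k : nat), (k <= d i)%N -> g i (p i k) = 0) ->
  forall v : R,
    is_max_value R _
      (fun x : 'I_n -> R => inP R n m A b x /\ inX R n d p x)
      (fun x => (a0 + \sum_(i < n) a i * f i (x i)) /
                (b0 + \sum_(i < n) bb i * f i (x i))
                + \sum_(i < n) g i (x i))
      v
    <->
    is_max_value R _
      (fun w : R * ('I_n -> R) * (forall i : 'I_n, 'I_(d i) -> R) * ('I_n -> R) =>
         let: (rho, mu, s, y) := w in
         b0 * rho + \sum_(i < n) bb i * mu i = 1 /\
         (forall i, mu i = f i (p i 0%N) * rho
                          + \sum_(j < d i) (f i (p i j.+1) - f i (p i j)) * s i j) /\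
         (forall i (j : 'I_(d i)), s i j <= rho) /\
         (forall i (j j' : 'I_(d i)), (j <= j')%N -> s i j' <= s i j) /\
         (forall i (j : 'I_(d i)), 0 <= s i j) /\
         (forall k : 'I_m, b k ord0 * rho <= \sum_(i < n) A k i * y i) /\
         (forall i, y i = p i 0%N * rho
                          + \sum_(j < d i) (p i j.+1 - p i j) * s i j))
      (fun w => let: (rho, mu, s, y) := w in a0 * rho + \sum_(i < n) a i * mu i)
      v.
Proof.
move=> d_gt0 _ _ b0_ge0 _ den_gt0 ideal g0 v.
have g_grid x : inX R n d p x -> \sum_(i < n) g i (x i) = 0.
  by move=> xX; apply: big1 => i _; have [k [kd ->]] := xX i; exact: g0.
apply: is_max_value_transfer => [x [xP xX] | w lpw].
- have [w lpw wx] := grid_lp_value a0 a den_gt0 xP xX.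
  by exists w => //=; rewrite g_grid // addr0.
- have [x [xP xX] wx] := lp_value_le_grid a0 a d_gt0 b0_ge0 den_gt0 ideal lpw.
  by exists x => //=; rewrite g_grid // addr0.
Qed.
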